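(* Let $n\ge 1$, let $x_1,\dots,x_n$ be distinct integers each greater than $1$, and let $D=\{1,x_1,\dots,x_n\}$. Then $\sigma(D)=2-n+\sum_{i=1}^n x_i$.
   Context: A signed tree is a pair $(T,s)$ where $T$ is a finite tree and $s:E(T)\to\{+,-\}$. The signed degree $sdeg(v)$ of a vertex is the number of incident positive edges minus the number of incident negative edges. $(T,s)$ realizes (satisfies) a set $D$ of integers if $D=\{sdeg(v):v\in V(T)\}$. For a set $D$ containing $1$ or $-1$, $\sigma(D)=\min\{|V(T)|: \text{some signed tree }(T,s)\text{ realizes }D\}$. *)

From mathcomp Require Import all_boot all_order all_algebra.
Set Implicit Arguments. Unset Strict Implicit. Unset Printing Implicit Defensive.
Import Order.TTheory GRing.Theory Num.Theory.
Local Open Scope ring_scope.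

Definition simple_graph (N : nat) (e : rel 'I_N) : Prop :=
  symmetric e /\ irreflexive e.

Definition graph_connected (N : nat) (e : rel 'I_N) : Prop :=
  forall u v : 'I_N, connect e u v.

Definition acyclic (N : nat) (e : rel 'I_N) : Prop :=
  ~ (exists c : seq 'I_N, [/\ (3 <= size c)%N, uniq c & cycle e c]).

Definition is_tree (N : nat) (e : rel 'I_N) : Prop :=
  [/\ (0 < N)%N, simple_graph e, graph_connected e & acyclic e].

(* A signing s (true = '+', false = '-'); only its values on edges matter;
   it is required to be symmetric so that it is a function of the edge. *)
Definition signing (N : nat) (s : 'I_N -> 'I_N -> bool) : Prop :=
  forall u v, s u v = s v u.

Definition signed_tree (N : nat) (e : rel 'I_N) (s : 'I_N -> 'I_N -> bool) :=
  is_tree e /\ signing s.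

Definition sdeg (N : nat) (e : rel 'I_N) (s : 'I_N -> 'I_N -> bool)
  (v : 'I_N) : int :=
  (#|[set u | e v u && s v u]|%:Z - #|[set u | e v u && ~~ s v u]|%:Z).

Definition realizes (N : nat) (e : rel 'I_N) (s : 'I_N -> 'I_N -> bool)
  (D : int -> Prop) : Prop :=
  forall d : int, D d <-> exists v : 'I_N, sdeg e s v = d.

Definition is_sigma (D : int -> Prop) (m : nat) : Prop :=
  (exists (e : rel 'I_m) (s : 'I_m -> 'I_m -> bool),
      signed_tree e s /\ realizes e s D) /\
  (forall (N : nat) (e : rel 'I_N) (s : 'I_N -> 'I_N -> bool),
      signed_tree e s -> realizes e s D -> (m <= N)%N).

From mathcomp Require Import all_boot all_order all_algebra zify.
Set Implicit Arguments. Unset Strict Implicit. Unset Printing Implicit Defensive.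
Import Order.TTheory GRing.Theory Num.Theory.

(* In a tree on N vertices the degrees sum to 2(N - 1), and a signed degree
   never exceeds the degree.  If every signed degree lies in D, they are all at
   least 1 and n distinct vertices carry the values x_i, so
   sum_i (x_i - 1) <= sum_v (sdeg v - 1) <= 2(N - 1) - N, i.e.
   N >= 2 - n + sum_i x_i.  Conversely, give a root x_1 children, give n - 1
   further vertices x_2 - 1, ..., x_n - 1 children each, and make all other
   vertices leaves: with all edges positive this tree realizes D and has
   exactly 2 - n + sum_i x_i vertices. *)

Section ForestDegrees.
Variables (N : nat) (e : rel 'I_N).
Hypotheses (e_sym : symmetric e) (e_irr : irreflexive e) (e_acyclic : acyclic e).

Definition deg_in (S : {set 'I_N}) v := #|[set u in S | e v u]|.

Lemma deg_in_sum (S : {set 'I_N}) v : deg_in S v = \sum_(u in S) (e u v : nat).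
Proof.
rewrite /deg_in -sum1dep_card big_mkcondr /=.
by apply: eq_bigr => u _; rewrite e_sym; case: (e v u).
Qed.

Lemma deg_inD1 (S : {set 'I_N}) x (xS : x \in S) v :
  deg_in S v = e v x + deg_in (S :\ x) v.
Proof.
rewrite /deg_in (cardsD1 x) !inE xS /=; congr (_ + _).
by apply: eq_card => u; rewrite !inE andbA.
Qed.

Lemma path_head_chord_free x a q u :
  uniq (x :: a :: q) -> path e x (a :: q) -> u \in q -> e x u = false.
Proof.
move=> xq_uniq xq_path /splitPr uq; apply/negP => exu; apply: e_acyclic.
case: uq xq_uniq xq_path => q1 q2; rewrite -cat_rcons -2!cat_cons.
move=> xq_uniq xq_path; exists (x :: a :: rcons q1 u); split.
- by rewrite /= size_rcons.
- by move: xq_uniq; rewrite cat_uniq => /andP[].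
- move: xq_path; rewrite cat_path => /andP[xq_path _].
  by rewrite /cycle rcons_path xq_path /= last_rcons e_sym.
Qed.

Lemma deg_in_path_head (S : {set 'I_N}) x q : uniq (x :: q) -> path e x q ->
  (forall y, y \in S -> e x y -> y \in x :: q) -> deg_in S x <= 1.
Proof.
move=> xq_uniq xq_path closed; rewrite -(cards1 (head x q)).
apply/subset_leq_card/subsetP => u; rewrite !inE => /andP[uS exu].
move: (closed u uS exu); case: q xq_uniq xq_path {closed} => [|a q] xq_uniq xq_path.
  by rewrite inE.
rewrite !inE => /or3P[/eqP ux | // | uq]; first by rewrite ux e_irr in exu.
by rewrite (path_head_chord_free xq_uniq xq_path uq) in exu.
Qed.

(* Extend a simple path at its head as long as possible; the bound [d] on the
   number of extensions is exhausted only if the path would exceed [N] vertices. *)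
Lemma leaf_of_path (S : {set 'I_N}) d x q : N < size (x :: q) + d -> uniq (x :: q) ->
  all [in S] (x :: q) -> path e x q -> exists2 y, y \in S & deg_in S y <= 1.
Proof.
elim: d x q => [|d IH] x q ltN xq_uniq xqS xq_path.
  have := max_card (mem (x :: q)).
  by rewrite card_ord (card_uniqP xq_uniq) leqNgt -(addn0 (size _)) ltN.
have [y /and3P[yS exy y_new] | closed] :=
  pickP [pred y | [&& y \in S, e x y & y \notin x :: q]].
  apply: (IH y (x :: q)); rewrite /= ?yS ?y_new //; first by rewrite addSnnS.
  by rewrite e_sym exy.
exists x; first by case/andP: xqS.
apply: deg_in_path_head xq_uniq xq_path _ => y yS exy.
by move: (closed y); rewrite /= yS exy => /negbFE.
Qed.

Lemma exists_leaf (S : {set 'I_N}) : S != set0 -> exists2 y, y \in S & deg_in S y <= 1.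
Proof.
by case/set0Pn => x xS; apply: (@leaf_of_path S N x [::]); rewrite //= xS.
Qed.

Lemma sum_deg_in_le (S : {set 'I_N}) : \sum_(v in S) deg_in S v <= 2 * #|S|.-1.
Proof.
move cardS: #|S| => k; elim: k S cardS => [|k IH] S cardS.
  by rewrite (cards0_eq cardS) big_set0.
have [x xS leaf_x] : exists2 x, x \in S & deg_in S x <= 1.
  by apply: exists_leaf; rewrite -card_gt0 cardS.
set S' := S :\ x.
have cardS' : #|S'| = k by move: (cardsD1 x S); rewrite xS cardS => -[].
have deg_x : deg_in S x = deg_in S' x by rewrite (deg_inD1 xS) e_irr.
have deg_x_le : deg_in S' x <= #|S'|.
  by apply/subset_leq_card/subsetP => u; rewrite inE => /andP[].
have -> : \sum_(v in S) deg_in S v = 2 * deg_in S' x + \sum_(v in S') deg_in S' v.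
  rewrite (eq_bigr (fun v => e v x + deg_in S' v)); last by move=> v _; exact: deg_inD1.
  rewrite big_split /= -deg_in_sum deg_x.
  rewrite (bigD1 x xS) /= addnA addnn -mul2n; congr (_ + _).
  by apply: eq_bigl => v; rewrite !inE andbC.
by have := IH S' cardS'; move: leaf_x deg_x_le; rewrite deg_x cardS'; lia.
Qed.

Lemma sum_deg_le : \sum_v #|[set u | e v u]| <= 2 * N.-1.
Proof.
have := sum_deg_in_le setT; rewrite cardsT card_ord.
congr (_ <= _); apply: eq_big => [v | v _]; first by rewrite in_setT.
by apply: eq_card => u; rewrite !inE.
Qed.

End ForestDegrees.

Section ParentTree.
Variable ps : seq nat.
Hypothesis ps_le : forall i, i < size ps -> nth 0 ps i <= i.
Let m := (size ps).+1.

Definition parent (u : 'I_m) := nth 0 ps u.-1.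

Definition parent_rel : rel 'I_m :=
  fun u v => (0 < u) && (parent u == v) || (0 < v) && (parent v == u).

Lemma parent_lt (u : 'I_m) : 0 < u -> parent u < u.
Proof.
case: u => [[|k] //= k_lt] _; rewrite /parent /= ltnS; exact: ps_le.
Qed.

Lemma parent_rel_sym : symmetric parent_rel.
Proof. by move=> u v; rewrite /parent_rel orbC. Qed.

Lemma parent_rel_irr : irreflexive parent_rel.
Proof.
move=> u; rewrite /parent_rel orbb; apply/negP => /andP[u_gt0 /eqP pu].
by have := parent_lt u_gt0; rewrite pu ltnn.
Qed.

Lemma parent_rel_lt (u v : 'I_m) : v < u -> parent_rel u v -> parent u = v.
Proof.
move=> vu /orP[/andP[_ /eqP //] | /andP[v_gt0 /eqP pv]].
by have := parent_lt v_gt0; rewrite pv ltnNge ltnW.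
Qed.

Lemma parent_ord (u : 'I_m) : 0 < u -> {p : 'I_m | val p = parent u}.
Proof. by move=> u_gt0; exists (Ordinal (ltn_trans (parent_lt u_gt0) (ltn_ord u))). Qed.

Lemma parent_rel_connect0 (u : 'I_m) : connect parent_rel u ord0.
Proof.
case: u => k; elim/ltn_ind: k => k IH k_lt; set u := Ordinal k_lt.
have [k0 | u_gt0] := posnP k; first by rewrite (_ : u = ord0) //; apply: val_inj.
have [p pE] := parent_ord (u_gt0 : 0 < u).
apply: connect_trans (connect1 (_ : parent_rel u p)) _.
  by rewrite /parent_rel u_gt0 pE eqxx.
case: p pE => p p_lt /= pE; apply: IH; rewrite pE; exact: (@parent_lt u).
Qed.

(* The largest vertex [w] of a cycle has two distinct smaller neighbours on it,
   and both would have to be the parent of [w]. *)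
Lemma parent_rel_acyclic : acyclic parent_rel.
Proof.
case=> c [c_size c_uniq c_cycle].
have [c0 c0c] : exists c0, c0 \in c.
  by case: c c_size {c_uniq c_cycle} => // c0 c; exists c0; rewrite mem_head.
case: (@arg_maxnP _ c0 (fun u => u \in c) val c0c) => w wc w_max.
case: (rot_to wc) => i q rot_c.
have wq_uniq : uniq (w :: q) by rewrite -rot_c rot_uniq.
have wq_cycle : cycle parent_rel (w :: q) by rewrite -rot_c rot_cycle.
have q_size : 2 <= size q by move: c_size; rewrite -(size_rot i) rot_c.
have lt_w u : u \in q -> u < w.
  move=> uq; have uc : u \in c by rewrite -(mem_rot i) rot_c inE uq orbT.
  rewrite ltn_neqAle (w_max u uc : u <= w) andbT.
  by apply/eqP => /val_inj uw; move: wq_uniq; rewrite /= -uw uq.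
case: q wq_uniq wq_cycle q_size lt_w {rot_c} => [|a [|b q]] //= /and3P[_ a_new _].
move=> /and3P[wa _]; rewrite rcons_path => /andP[_ lw] _ lt_w.
have pa := parent_rel_lt (lt_w a (mem_head _ _)) wa.
have pl : parent w = last b q.
  by apply: parent_rel_lt; [apply: lt_w; rewrite inE mem_last orbT | rewrite parent_rel_sym].
by move: a_new; rewrite (_ : a = last b q) ?mem_last //; apply: val_inj; rewrite /= -pa.
Qed.

Lemma parent_rel_tree : is_tree parent_rel.
Proof.
split => //; first by split; [exact: parent_rel_sym | exact: parent_rel_irr].
- move=> u v; apply: connect_trans (parent_rel_connect0 u) _.
  by rewrite (sym_connect_sym parent_rel_sym) parent_rel_connect0.
- exact: parent_rel_acyclic.
Qed.

Lemma parent_rel_deg (v : 'I_m) :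
  #|[set u | parent_rel v u]| = (0 < v) + count_mem (val v) ps.
Proof.
rewrite -sum1dep_card big_mkcond /=.
rewrite (eq_bigr (fun u : 'I_m =>
  ((0 < v) && (parent v == u)) + ((0 < u) && (parent u == v)))); last first.
  move=> u _; rewrite /parent_rel.
  case: (boolP ((0 < v) && _)) => [/andP[v_gt0 /eqP pv] | _]; last by case: (_ && _).
  case: (boolP ((0 < u) && _)) => [/andP[u_gt0 /eqP pu] | //].
  by have := parent_lt v_gt0; have := parent_lt u_gt0; rewrite pu pv; lia.
rewrite big_split /=; congr (_ + _).
  have [v0 | v_gt0] := posnP v; first by rewrite big1 ?v0 // => u _; rewrite v0.
  have [p pE] := parent_ord v_gt0.
  rewrite (bigD1 p) //= -pE eqxx big1 // => u u_neq_p.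
  by case: eqP => // /val_inj pu; rewrite pu eqxx in u_neq_p.
rewrite big_ord_recl /= add0n -sum1_count (big_nth 0) big_mkord [RHS]big_mkcond.
by apply: eq_bigr => i _; rewrite /parent /=; case: (_ == _).
Qed.

End ParentTree.

Section ChildBlocks.
Variable c : nat -> nat.

(* As a parent sequence, [child_blocks j] gives each vertex [k < j] exactly
   [c k] children. *)
Fixpoint child_blocks j := if j is k.+1 then child_blocks k ++ nseq (c k) k else [::].

Lemma size_child_blocks j : size (child_blocks j) = \sum_(k < j) c k.
Proof. by elim: j => [|j IH]; rewrite ?big_ord0 // big_ord_recr /= size_cat size_nseq IH. Qed.

Lemma count_child_blocks j v : count_mem v (child_blocks j) = if v < j then c v else 0.
Proof.
elim: j => [|j IH] //=; rewrite count_cat count_nseq IH /= ltnS.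
by case: ltngtP => [v_lt | v_gt | ->]; rewrite ?eqxx ?mul0n ?mul1n ?addn0.
Qed.

Lemma size_child_blocks_ge j : (forall k, k < j -> 0 < c k) -> j <= size (child_blocks j).
Proof.
move=> c_gt0; rewrite size_child_blocks -[j in j <= _]card_ord -sum1_card.
by apply: leq_sum => k _; exact: c_gt0.
Qed.

Lemma child_blocks_le j : (forall k, k < j -> 0 < c k) ->
  forall i, i < size (child_blocks j) -> nth 0 (child_blocks j) i <= i.
Proof.
elim: j => [|k IH] ck_gt0 i //=; rewrite size_cat nth_cat => i_lt.
have ck'_gt0 l : l < k -> 0 < c l by move=> l_lt; apply: ck_gt0; exact: leqW.
case: ifP => [i_lt' | /negbT]; first exact: IH.
rewrite -leqNgt nth_nseq => i_ge; case: ifP => // _.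
exact: leq_trans (size_child_blocks_ge ck'_gt0) i_ge.
Qed.

End ChildBlocks.

Lemma tree_with_degrees n (y : nat -> nat) : 0 < n -> (forall k, k < n -> 1 < y k) ->
  exists m (e : rel 'I_m), [/\ m + n = \sum_(k < n) y k + 2, n < m, is_tree e
    & forall v : 'I_m, #|[set u | e v u]| = if v < n then y v else 1].
Proof.
(* Every vertex [k > 0] also has its parent as a neighbour. *)
move=> n_gt0 y_gt1; pose c k := y k - (0 < k).
have c_gt0 k : k < n -> 0 < c k by move/y_gt1; rewrite /c; case: (0 < k); lia.
have ps_le := child_blocks_le c_gt0.
exists (size (child_blocks c n)).+1, (@parent_rel (child_blocks c n)); split.
- have sum_pos : \sum_(k < n) (0 < k : nat) = n.-1.
    rewrite -[in LHS](prednK n_gt0) big_ord_recl /= (eq_bigr (fun=> 1)) //.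
    by rewrite big_const_ord iter_addn_0 mul1n.
  have -> : \sum_(k < n) y k = \sum_(k < n) c k + \sum_(k < n) (0 < k : nat).
    rewrite -big_split; apply: eq_bigr => k _; have := y_gt1 k (ltn_ord k).
    by rewrite /c /=; case: (0 < k); lia.
  by rewrite sum_pos size_child_blocks; lia.
- exact: size_child_blocks_ge c_gt0.
- exact: parent_rel_tree ps_le.
- case=> k k_lt; rewrite (parent_rel_deg ps_le) count_child_blocks /= /c.
  case: ifP => [k_lt_n | /negbT]; first by have := y_gt1 k k_lt_n; case: (0 < k) => /=; lia.
  by rewrite -leqNgt => /(leq_trans n_gt0) ->.
Qed.

Local Open Scope ring_scope.

Lemma sdeg_le_deg N (e : rel 'I_N) s v : sdeg e s v <= #|[set u | e v u]|%:Z.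
Proof.
have : (#|[set u | e v u && s v u]| <= #|[set u | e v u]|)%N.
  by apply/subset_leq_card/subsetP => u; rewrite !inE => /andP[].
rewrite /sdeg; lia.
Qed.

Lemma sdeg_true N (e : rel 'I_N) v : sdeg e (fun _ _ => true) v = #|[set u | e v u]|%:Z.
Proof.
rewrite /sdeg (_ : [set u | e v u && ~~ true] = set0) ?cards0 ?subr0.
  by congr Posz; apply: eq_card => u; rewrite !inE andbT.
by apply/setP => u; rewrite !inE andbF.
Qed.

Lemma tree_sum_sdeg_le N (e : rel 'I_N) s :
  signed_tree e s -> \sum_v (sdeg e s v - 1) <= N%:Z - 2.
Proof.
case=> -[N_gt0 [e_sym e_irr] _ e_acyclic] _.
apply: le_trans (_ : \sum_v (#|[set u | e v u]|%:Z - 1) <= _).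
  by apply: ler_sum => v _; rewrite lerD2r sdeg_le_deg.
have := sum_deg_le e_sym e_irr e_acyclic.
rewrite -lez_nat (big_morph Posz PoszD (erefl 0%:Z)) sumrB sumr_const card_ord.
move: (\sum_v _) => deg_sum; lia.
Qed.

Lemma sum_values_sub1_le N (e : rel 'I_N) s n (x : 'I_n -> int) :
  signed_tree e s -> injective x -> (forall v, 1 <= sdeg e s v) ->
  (forall i, exists v, sdeg e s v = x i) -> \sum_(i < n) (x i - 1) <= N%:Z - 2.
Proof.
move=> tree_es x_inj sdeg_ge1 /fin_all_exists[f f_x].
have f_inj : injective f by move=> i j fij; apply: x_inj; rewrite -!f_x fij.
apply: le_trans (tree_sum_sdeg_le tree_es).
have -> : \sum_(i < n) (x i - 1) = \sum_(i in [set: 'I_n]) (sdeg e s (f i) - 1).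
  by apply: eq_big => [i | i _]; rewrite ?in_setT ?f_x.
rewrite (bigID [in f @: setT]) /= big_imset /=; last by move=> i j _ _; apply: f_inj.
by rewrite lerDl sumr_ge0 // => v _; rewrite subr_ge0.
Qed.

Lemma sigma_lower_bound n (x : 'I_n -> int) N (e : rel 'I_N) s :
  injective x -> (forall i, 1 < x i) -> signed_tree e s ->
  realizes e s (fun d => d = 1 \/ exists i, d = x i) ->
  2 - n%:Z + \sum_(i < n) x i <= N%:Z.
Proof.
move=> x_inj x_gt1 tree_es real_es.
have sdeg_ge1 v : 1 <= sdeg e s v.
  by case: ((real_es _).2 (ex_intro _ v erefl)) => [-> | [i ->]]; last exact: ltW.
have x_val i : exists v, sdeg e s v = x i by apply/(real_es _).1; right; exists i.
have := sum_values_sub1_le tree_es x_inj sdeg_ge1 x_val.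
rewrite sumrB sumr_const card_ord; move: (\sum_i x i) => x_sum; lia.
Qed.

Lemma sigma_upper_bound n (x : 'I_n -> int) : (0 < n)%N -> (forall i, 1 < x i) ->
  exists2 m : nat, m%:Z = 2 - n%:Z + \sum_(i < n) x i &
    exists e s, @signed_tree m e s /\ realizes e s (fun d => d = 1 \/ exists i, d = x i).
Proof.
move=> n_gt0 x_gt1; pose y k := if insub k is Some i then `|x i|%N else 0%N.
have yE (i : 'I_n) : (y i)%:Z = x i by rewrite /y valK; have := x_gt1 i; lia.
have y_gt1 k : (k < n)%N -> (1 < y k)%N.
  by move=> k_lt; have := x_gt1 (Ordinal k_lt); rewrite -yE /=; lia.
have [m [e [m_eq n_lt_m e_tree deg_e]]] := tree_with_degrees n_gt0 y_gt1.
exists m.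
  have := congr1 Posz m_eq; rewrite !PoszD (big_morph Posz PoszD (erefl 0%:Z)).
  rewrite (eq_bigr _ (fun i _ => yE i)); move: (\sum_i x i) => x_sum; lia.
exists e, (fun _ _ => true); split => // d; split.
- case=> [-> | [i ->]].
    by exists (Ordinal n_lt_m); rewrite sdeg_true deg_e /= ltnn.
  by exists (Ordinal (ltn_trans (ltn_ord i) n_lt_m)); rewrite sdeg_true deg_e /= ltn_ord yE.
- case=> v <-; rewrite sdeg_true deg_e; case: ifP => [v_lt | _]; last by left.
  by right; exists (Ordinal v_lt); rewrite -yE.
Qed.

Theorem mainTheorem8 (n : nat) (x : 'I_n -> int) :
  (1 <= n)%N -> injective x -> (forall i, 1 < x i) ->
  exists m : nat,
    is_sigma (fun d : int => d = 1 \/ exists i, d = x i) m /\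
    m%:Z = 2 - n%:Z + \sum_(i < n) x i.
Proof.
move=> n_gt0 x_inj x_gt1.
have [m m_eq [e [s [tree_es real_es]]]] := sigma_upper_bound n_gt0 x_gt1.
exists m; split => //; split; first by exists e, s.
by move=> N e' s' tree' real'; rewrite -lez_nat m_eq; apply: sigma_lower_bound tree' real'.
Qed.
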